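(* (i) Let $G$ be a digraph on $n$ vertices with $\delta^0(G)\geq 7n/8$ and let $x,y\in V(G)$ be distinct. Then for every orientation $Q$ of a path on $n$ vertices, $G$ contains a Hamilton path which is a copy of $Q$ whose endvertices are mapped to $x$ and $y$ (initial vertex of $Q$ to $x$, final vertex to $y$). (ii) Let $m\geq 10$ and let $G$ be a bipartite digraph with vertex classes $A,B$, $|A|=m+1$, $|B|=m$ (all edges go between $A$ and $B$, in either direction), and suppose $\delta^0(G)\geq (7m+2)/8$. Let $x,y\in A$ be distinct. Then for every orientation $Q$ of a path on $2m+1$ vertices, $G$ contains a Hamilton path which is a copy of $Q$ whose initial vertex is mapped to $x$ and final vertex to $y$.
   Context: A digraph has no loops and at most one edge from $x$ to $y$ for each ordered pair of distinct vertices (edges $xy$ and $yx$ may both be present). $\delta^0(G)$ is the minimum over all vertices of the minimum of in- and outdegree. A copy of an oriented path $Q$ in $G$ is an injective map $\phi:V(Q)\to V(G)$ with $\phi(u)\phi(v)\in E(G)$ for every edge $uv$ of $Q$; it is a Hamilton path if $\phi$ is a bijection. *)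

From mathcomp Require Import all_boot.
Set Implicit Arguments. Unset Strict Implicit. Unset Printing Implicit Defensive.

(* A digraph on a finite vertex type V is an irreflexive relation E : rel V
   (E u v means there is an edge u -> v); at most one edge per ordered pair
   is automatic. *)
Definition digraph (V : finType) (E : rel V) : Prop := irreflexive E.

Definition outdeg (V : finType) (E : rel V) (v : V) : nat := #|[set w | E v w]|.
Definition indeg  (V : finType) (E : rel V) (v : V) : nat := #|[set w | E w v]|.

(* An orientation Q of a path on k vertices 0,1,...,k-1 is given by k-1
   booleans: bit i = true means the edge i -> i+1, false means i+1 -> i. *)
Definition path_orientation (k : nat) := (k.-1).-tuple bool.

Definition copy_of_path (V : finType) (E : rel V) (k : nat)
  (Q : path_orientation k) (phi : 'I_k -> V) : Prop :=
  injective phi /\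
  forall i j : 'I_k, val j = (val i).+1 ->
    if nth false Q (val i) then E (phi i) (phi j) else E (phi j) (phi i).

Definition hamilton_copy_xy (V : finType) (E : rel V) (k : nat)
  (Q : path_orientation k) (x y : V) : Prop :=
  exists phi : 'I_k -> V,
    [/\ copy_of_path E Q phi, bijective phi,
        (forall i : 'I_k, val i = 0 -> phi i = x) &
        (forall i : 'I_k, val i = k.-1 -> phi i = y)].

From mathcomp Require Import all_boot zify.
Set Implicit Arguments. Unset Strict Implicit. Unset Printing Implicit Defensive.

(* Place the vertices along the positions of Q, x first and y last, and count
   the misfits, i.e. consecutive positions whose edge is missing in the
   direction Q prescribes.  Next to a misfit pick an interior position p and a
   position j such that g j fits between the neighbours of p and g p between
   those of j; swapping g p and g j removes the misfit and creates none.  Each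
   of the four adjacencies asked of j fails only when the relevant vertex is a
   non-neighbour of a fixed vertex, and the semidegree bound leaves at most
   about n/8 of those, so one of the n - 4 candidates works.  In the bipartite
   case A stays on the even positions, the first and last edges are fixed in
   advance, and the m - 1 even interior positions are the candidates. *)

Lemma count_orb_le (T : Type) (a b : pred T) (s : seq T) :
  count (fun x => a x || b x) s <= count a s + count b s.
Proof. by rewrite -count_predUI leq_addr. Qed.

Lemma count_lt_subpred (T : eqType) (a b : pred T) (s : seq T) x :
  subpred a b -> x \in s -> b x -> ~~ a x -> count a s < count b s.
Proof.
move=> sab; elim: s => //= y s IH; rewrite inE => /orP [/eqP -> | xs] bx ax.
  by rewrite bx (negbTE ax) add1n ltnS sub_count.
by have := IH xs bx ax; case ay: (a y); rewrite ?(sab _ ay) //; case: (b y) => /=; lia.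
Qed.

Lemma has_of_count_lt (T : Type) (a : pred T) (s : seq T) :
  count (fun x => ~~ a x) s < size s -> has a s.
Proof.
rewrite has_count lt0n; apply: contraTneq => a0.
by rewrite -leqNgt -(count_predC a) a0.
Qed.

Lemma count_mem_le (T : eqType) (s t : seq T) : uniq s -> count (mem t) s <= size t.
Proof.
by move=> us; rewrite -size_filter uniq_leq_size ?filter_uniq // => z; rewrite mem_filter => /andP [].
Qed.

Definition transp (p j l : nat) := if l == p then j else if l == j then p else l.

Lemma transp_id p j l : l != p -> l != j -> transp p j l = l.
Proof. by rewrite /transp => /negbTE -> /negbTE ->. Qed.

Lemma transpK p j : involutive (transp p j).
Proof.
move=> l; rewrite /transp.
case: (eqVneq l p) => [->|lp]; first by rewrite eqxx; case: eqVneq.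
by case: (eqVneq l j) => [->|lj]; rewrite ?eqxx ?(negbTE lp) ?(negbTE lj).
Qed.

Section Arrangements.

Variables (V : finType) (E : rel V).

Definition oriented_edge (b : bool) (u v : V) := if b then E u v else E v u.

Lemma oriented_edgeC b u v : oriented_edge b u v = oriented_edge (~~ b) v u.
Proof. by case: b. Qed.

Definition oriented_deg b a := if b then outdeg E a else indeg E a.

Lemma card_oriented_nbrs b a : #|[set w | oriented_edge b a w]| = oriented_deg b a.
Proof. by case: b. Qed.

Lemma exists_oriented_nbr_neq b a z :
  1 < oriented_deg b a -> exists2 w, oriented_edge b a w & w != z.
Proof.
rewrite -card_oriented_nbrs => /card_gt1P [w1 [w2 [+ + w12]]]; rewrite !inE => e1 e2.
by case: (eqVneq w1 z) => [z1|]; [exists w2; rewrite // -z1 eq_sym | exists w1].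
Qed.

Definition missing (b : bool) (a : V) (D : {set V}) :=
  #|[set w in D | ~~ oriented_edge b a w]|.

Lemma missing_add_deg b a (D : {set V}) :
  (forall w, oriented_edge b a w -> w \in D) ->
  missing b a D + oriented_deg b a = #|D|.
Proof.
move=> nbrD; rewrite -card_oriented_nbrs -(cardsID [set w | oriented_edge b a w] D) addnC.
congr (_ + _); apply: eq_card => w; rewrite !inE.
  by apply/idP/andP => [h|[]] //; split=> //; apply: nbrD.
by rewrite andbC.
Qed.

Lemma count_missing_le (s : seq nat) (f : nat -> V) b a (D : {set V}) :
  uniq s -> {in s &, injective f} -> {in s, forall j, f j \in D} ->
  count (fun j => ~~ oriented_edge b a (f j)) s <= missing b a D.
Proof.
move=> us finj fD.
have -> : count (fun j => ~~ oriented_edge b a (f j)) s =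
          count (fun w => ~~ oriented_edge b a w) (map f s) by rewrite count_map.
rewrite -size_filter /missing cardE uniq_leq_size ?filter_uniq ?map_inj_in_uniq //.
by move=> w; rewrite mem_filter mem_enum inE => /andP [nab /mapP [j js eqw]]; rewrite nab eqw fD.
Qed.

Lemma count_missing_inout_le (s : seq nat) (f : nat -> V) (bs : nat -> bool) a (D : {set V}) :
  uniq s -> {in s &, injective f} -> {in s, forall j, f j \in D} ->
  count (fun j => ~~ oriented_edge (bs j) a (f j)) s <= missing true a D + missing false a D.
Proof.
move=> us finj fD; apply: leq_trans _ (leq_add (count_missing_le true a us finj fD)
                                                 (count_missing_le false a us finj fD)).
apply: leq_trans (count_orb_le _ _ _); apply: sub_count => j.
by case: (bs j) => ->; rewrite ?orbT.
Qed.

(* Position [l < K] holds vertex [g l]; values of [g] at [l >= K] are irrelevant. *)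
Definition arrangement K x y (g : nat -> V) :=
  [/\ {in gtn K &, injective g}, g 0 = x & g K.-1 = y].

Definition swap_at (g : nat -> V) p j := fun l => g (transp p j l).

Lemma arrangement_swap K x y g p j :
  arrangement K x y g -> 0 < p < K.-1 -> 0 < j < K.-1 -> arrangement K x y (swap_at g p j).
Proof.
move=> [ginj g0 gK] hp hj; split; rewrite /swap_at ?transp_id //; try lia.
have transp_lt l : l < K -> transp p j l < K by rewrite /transp; case: (l =P p); case: (l =P j); lia.
move=> a b; rewrite !inE => aK bK /ginj; rewrite !inE !transp_lt // => /(_ isT isT).
exact: (@inv_inj _ _ (transpK p j) a b).
Qed.

Lemma exists_seq_ends (D : {set V}) x y : x \in D -> y \in D -> x != y ->
  exists r, [/\ uniq (x :: r), {subset x :: r <= D}, size r = #|D|.-1 & last x r = y].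
Proof.
move=> xD yD xy; exists (rcons (enum [set w in D | (w != x) && (w != y)]) y).
have notin z : z \in [:: x; y] -> z \notin enum [set w in D | (w != x) && (w != y)].
  by rewrite !inE mem_enum inE => /orP [] /eqP ->; rewrite eqxx ?andbF.
split; last by rewrite last_rcons.
- rewrite /= rcons_uniq mem_rcons inE negb_or xy notin ?inE ?eqxx ?orbT //=.
  by rewrite andbC enum_uniq /= notin // !inE eqxx orbT.
- by move=> w; rewrite inE mem_rcons !inE mem_enum !inE => /or3P [/eqP -> | /eqP -> | /and3P []].
- have -> : [set w in D | (w != x) && (w != y)] = D :\ x :\ y.
    by apply/setP => w; rewrite !inE; case: (w \in D); case: (w == x); case: (w == y).
  by rewrite size_rcons -cardE (cardsD1 x D) (cardsD1 y (D :\ x)) xD !inE yD eq_sym xy.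
Qed.

Variable Q : seq bool.

Definition fits (g : nat -> V) l := oriented_edge (nth false Q l) (g l) (g l.+1).

Definition misfits K g := count (fun l => ~~ fits g l) (iota 0 K.-1).

Definition fits_at g l v :=
  oriented_edge (nth false Q l.-1) (g l.-1) v && oriented_edge (nth false Q l) v (g l.+1).

Lemma fits_at_self g p : 0 < p -> fits_at g p (g p) = fits g p.-1 && fits g p.
Proof. by move=> p0; rewrite /fits_at /fits prednK. Qed.

Lemma not_fits_at_self g p (l : nat) :
  0 < p -> l \in [:: p.-1; p] -> ~~ fits g l -> ~~ fits_at g p (g p).
Proof.
by move=> p0 lp nfl; rewrite fits_at_self // negb_and; move: lp; rewrite !inE => /orP [] /eqP <-;
   rewrite nfl ?orbT.
Qed.

Lemma misfitP K g : 0 < misfits K g -> exists2 l, l < K.-1 & ~~ fits g l.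
Proof. by rewrite -has_count => /hasP [l]; rewrite mem_iota; exists l. Qed.

Lemma misfits_descent K (P : (nat -> V) -> Prop) :
  (forall g, P g -> 0 < misfits K g -> exists2 g', P g' & misfits K g' < misfits K g) ->
  forall g, P g -> exists2 g, P g & misfits K g = 0.
Proof.
move=> improve g; have [n] := ubnP (misfits K g); elim: n g => // n IH g ltn Pg.
have [|pos] := posnP (misfits K g); first by exists g.
by have [g' Pg' lt'] := improve g Pg pos; apply: IH Pg'; exact: leq_trans lt' ltn.
Qed.

Lemma fits_swap_out g p j l :
  l \notin [:: p; j] -> l.+1 \notin [:: p; j] -> fits (swap_at g p j) l = fits g l.
Proof.
by rewrite !inE !negb_or => /andP [l1 l2] /andP [l3 l4]; rewrite /fits /swap_at !transp_id.
Qed.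

Lemma misfits_swap_lt K p j (l : nat) g :
  0 < p -> p.+1 < K -> 0 < j -> j \notin [:: p.-1; p.+1] ->
  l \in [:: p.-1; p] -> ~~ fits g l -> fits_at g p (g j) -> fits_at g j (g p) ->
  misfits K (swap_at g p j) < misfits K g.
Proof.
move=> p0 pK j0 jpp lp nfl fpj fjp.
have jp : j != p.
  by apply/eqP => e; move: (not_fits_at_self p0 lp nfl); rewrite -{2}e fpj.
move: jpp lp; rewrite !inE negb_or => /andP [jp1 jp2] lp.
pose g' := swap_at g p j.
have fits_at_swap i v : i.-1 \notin [:: p; j] -> i.+1 \notin [:: p; j] ->
    fits_at g' i v = fits_at g i v.
  by rewrite !inE !negb_or => /andP [? ?] /andP [? ?]; rewrite /fits_at /g' /swap_at !transp_id.
have fits_p : fits g' p.-1 && fits g' p.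
  rewrite -fits_at_self // {2}/g' /swap_at /transp eqxx fits_at_swap // !inE; lia.
have fits_j : fits g' j.-1 && fits g' j.
  rewrite -fits_at_self // {2}/g' /swap_at /transp eqxx (negbTE jp) fits_at_swap // !inE; lia.
apply: (count_lt_subpred (x := l)) => //.
- move=> i; apply: contra => fi.
  case: (boolP ((i \in [:: p.-1; p; j.-1; j]))); rewrite !inE.
    by case/or4P => /eqP ->; move: fits_p fits_j => /andP [? ?] /andP [? ?].
  by move=> hi; rewrite fits_swap_out // !inE; lia.
- by rewrite mem_iota; lia.
- by rewrite negbK; move: lp fits_p => /orP [] /eqP -> /andP [].
Qed.

Lemma count_bad_swaps_le K g p (s : seq nat) (D1 D2 D3 : {set V}) :
  {in gtn K &, injective g} -> uniq s -> {in s, forall j, 0 < j /\ j.+1 < K} ->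
  {in s, forall j, [/\ g j \in D1, g j \in D2, g j.-1 \in D3 & g j.+1 \in D3]} ->
  count (fun j => ~~ (fits_at g p (g j) && fits_at g j (g p))) s <=
    missing (nth false Q p.-1) (g p.-1) D1 + missing (~~ nth false Q p) (g p.+1) D2
    + 2 * (missing true (g p) D3 + missing false (g p) D3).
Proof.
move=> ginj us sK sD.
have inj_shift (f : nat -> nat) : {in s &, injective f} -> {in s, forall j, f j < K} ->
    {in s &, injective (g \o f)}.
  by move=> finj fK a b sa sb /ginj; rewrite !inE !fK // => /(_ isT isT) /finj; apply.
have inj_id : {in s &, injective g}.
  by apply: (inj_shift id) => // j /sK /=; lia.
have inj_pred : {in s &, injective (fun j => g j.-1)}.
  by apply: (inj_shift predn) => [a b /sK ? /sK ? /=|j /sK /=]; lia.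
have inj_succ : {in s &, injective (fun j => g j.+1)}.
  by apply: (inj_shift succn) => [a b _ _ /= []|j /sK /=]; lia.
pose c1 j := oriented_edge (nth false Q p.-1) (g p.-1) (g j).
pose c2 j := oriented_edge (~~ nth false Q p) (g p.+1) (g j).
pose c3 j := oriented_edge (~~ nth false Q j.-1) (g p) (g j.-1).
pose c4 j := oriented_edge (nth false Q j) (g p) (g j.+1).
have split_bad : count (fun j => ~~ (fits_at g p (g j) && fits_at g j (g p))) s <=
    count (fun j => ~~ c1 j) s + count (fun j => ~~ c2 j) s + count (fun j => ~~ c3 j) s
    + count (fun j => ~~ c4 j) s.
  rewrite -!addnA.
  apply: leq_trans (sub_count (a2 := fun j => ~~ c1 j || (~~ c2 j || (~~ c3 j || ~~ c4 j))) _ s) _.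
    move=> j; rewrite /fits_at (oriented_edgeC (nth false Q p)).
    by rewrite (oriented_edgeC (nth false Q j.-1)) -!negb_and !andbA.
  do 2!(apply: leq_trans (count_orb_le _ _ _) _; rewrite leq_add2l).
  exact: count_orb_le.
have b1 : count (fun j => ~~ c1 j) s <= missing (nth false Q p.-1) (g p.-1) D1.
  by apply: count_missing_le us inj_id _ => j /sD [].
have b2 : count (fun j => ~~ c2 j) s <= missing (~~ nth false Q p) (g p.+1) D2.
  by apply: count_missing_le us inj_id _ => j /sD [].
have b3 : count (fun j => ~~ c3 j) s <= missing true (g p) D3 + missing false (g p) D3.
  apply: (count_missing_inout_le (fun j => ~~ nth false Q j.-1) (g p) (f := fun j => g j.-1)) => //.
  by move=> j /sD [].
have b4 : count (fun j => ~~ c4 j) s <= missing true (g p) D3 + missing false (g p) D3.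
  apply: (count_missing_inout_le (fun j => nth false Q j) (g p) (f := fun j => g j.+1)) => //.
  by move=> j /sD [].
lia.
Qed.

End Arrangements.

Lemma hamilton_copy_of_arrangement (V : finType) (E : rel V) K (Q : path_orientation K) x y g :
  #|V| = K -> arrangement K x y g -> misfits E Q K g = 0 -> hamilton_copy_xy E Q x y.
Proof.
move=> cardV [ginj g0 gK] /eqP; rewrite eqn0Ngt -has_count => /hasPn nomisfit.
exists (fun i : 'I_K => g i); split.
- split=> [i j /ginj /val_inj | i j ij]; first by rewrite !inE !ltn_ord; apply.
  have := nomisfit i; rewrite mem_iota negbK /fits ij; apply.
  by move: ij (ltn_ord j) => /= ij jK; lia.
- by apply: inj_card_bij; [move=> i j /ginj /val_inj; rewrite !inE !ltn_ord; apply |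
     rewrite card_ord cardV].
- by move=> i /= ->.
- by move=> i /= ->.
Qed.

Section DenseDigraph.

Variables (V : finType) (E : rel V).
Hypothesis irrE : irreflexive E.
Hypothesis degE : forall v : V, 7 * #|V| <= 8 * outdeg E v /\ 7 * #|V| <= 8 * indeg E v.

Lemma dense_missing_le b a : 8 * missing E b a [set~ a] + 8 <= #|V|.
Proof.
have nbr_neq w : oriented_edge E b a w -> w \in [set~ a].
  by rewrite !inE; apply: contraTneq => ->; case: b; rewrite /= irrE.
have := missing_add_deg nbr_neq; rewrite cardsC1; clear nbr_neq.
have : 0 < #|V| by apply/card_gt0P; exists a.
by have := degE a; case: b => /=; lia.
Qed.

Lemma dense_good_swap (Q : seq bool) g p :
  {in gtn #|V| &, injective g} -> 0 < p -> p.+1 < #|V| ->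
  exists j, [/\ 0 < j < #|V|.-1, j \notin [:: p.-1; p.+1],
               fits_at E Q g p (g j) & fits_at E Q g j (g p)].
Proof.
move=> ginj p0 pn; set n := #|V|.
pose s := filter (predC (mem [:: p.-1; p.+1])) (iota 1 n.-2).
have sP j : j \in s -> [/\ 0 < j, j.+1 < n, j != p.-1 & j != p.+1].
  by rewrite mem_filter mem_iota !inE negb_or => /andP [/andP [? ?] ?]; split=> //; lia.
have us : uniq s by rewrite filter_uniq ?iota_uniq.
have size_s : n - 4 <= size s.
  have := count_predC (mem [:: p.-1; p.+1]) (iota 1 n.-2).
  by have := count_mem_le [:: p.-1; p.+1] (iota_uniq 1 n.-2); rewrite size_filter size_iota /=; lia.
have gneq a b : a < n -> b < n -> a != b -> g a != g b.
  by move=> an bn; apply: contra => /eqP /ginj; rewrite !inE => /(_ an bn) ->.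
have /hasP [j js /andP [fpj fjp]] :
    has (fun j => fits_at E Q g p (g j) && fits_at E Q g j (g p)) s.
  apply: has_of_count_lt; apply: leq_trans size_s.
  apply: leq_ltn_trans (count_bad_swaps_le E Q p (D1 := [set~ g p.-1]) (D2 := [set~ g p.+1])
                                           (D3 := [set~ g p]) ginj us _ _) _.
  - by move=> j /sP [].
  - by move=> j /sP [j0 jn jp1 jp2]; split; rewrite !inE gneq //; lia.
  have := dense_missing_le (nth false Q p.-1) (g p.-1).
  have := dense_missing_le (~~ nth false Q p) (g p.+1).
  have := dense_missing_le true (g p); have := dense_missing_le false (g p); lia.
by have [j0 jn jp1 jp2] := sP j js; exists j; split; rewrite ?inE ?negb_or ?jp1 ?jp2 //; lia.
Qed.

Lemma dense_arrangement_improve (Q : seq bool) x y g :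
  arrangement #|V| x y g -> 0 < misfits E Q #|V| g ->
  exists2 g', arrangement #|V| x y g' & misfits E Q #|V| g' < misfits E Q #|V| g.
Proof.
move=> arr_g /misfitP [l ln nfl]; have [ginj _ _] := arr_g.
have := dense_missing_le true x; set n := #|V| => n8.
have [p [lp p0 pn]] : exists p, [/\ l \in [:: p.-1; p], 0 < p & p.+1 < n].
  by exists (maxn 1 l); rewrite !inE; split; lia.
have [j [hj jp fpj fjp]] := dense_good_swap Q ginj p0 pn.
exists (swap_at g p j); first by apply: arrangement_swap => //; lia.
by apply: misfits_swap_lt lp nfl fpj fjp => //; lia.
Qed.

Lemma dense_hamilton_copy x y : x != y ->
  forall Q : path_orientation #|V|, hamilton_copy_xy E Q x y.
Proof.
move=> xy Q; have [r [ur _ size_r last_r]] := exists_seq_ends (in_setT x) (in_setT y) xy.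
have arr : arrangement #|V| x y (nth x (x :: r)).
  rewrite cardsT in size_r; split=> //; last first.
    by rewrite (_ : #|V|.-1 = (size (x :: r)).-1) ?nth_last ?size_r.
  move=> a b; rewrite !inE => an bn /eqP.
  by rewrite nth_uniq //= => [/eqP | |]; rewrite ?size_r; lia.
have [g arr_g /eqP] := misfits_descent (dense_arrangement_improve (Q := Q) (x := x) (y := y)) arr.
by move/eqP; apply: hamilton_copy_of_arrangement.
Qed.

End DenseDigraph.

Section BipartiteDigraph.

Variables (m : nat) (V : finType) (E : rel V) (A : {set V}).
Hypothesis m_ge4 : 4 <= m.
Hypothesis cardA : #|A| = m.+1.
Hypothesis cardB : #|~: A| = m.
Hypothesis bipE : forall u v : V, E u v -> (u \in A) != (v \in A).
Hypothesis degE : forall v : V, 7 * m + 2 <= 8 * outdeg E v /\ 7 * m + 2 <= 8 * indeg E v.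

Lemma oriented_edge_sides b u v : oriented_edge E b u v -> (v \in A) = (u \notin A).
Proof. by case: b => /bipE; case: (u \in A); case: (v \in A). Qed.

Lemma oriented_nbr_of_A b a : a \in A -> forall w, oriented_edge E b a w -> w \in ~: A.
Proof. by move=> aA w; rewrite inE => /oriented_edge_sides ->; rewrite aA. Qed.

Lemma missing_from_A_le b a : a \in A -> 8 * missing E b a (~: A) + 2 <= m.
Proof.
move=> aA; have := missing_add_deg (oriented_nbr_of_A (b := b) aA); rewrite cardB.
by have := degE a; case: b => /=; lia.
Qed.

Lemma missing_from_B_le b a : a \notin A -> 8 * missing E b a A <= m + 6.
Proof.
move=> aB; have nbrA w : oriented_edge E b a w -> w \in A by move/oriented_edge_sides ->.
have := missing_add_deg nbrA; rewrite cardA; clear nbrA.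
by have := degE a; case: b => /=; lia.
Qed.

Definition alternating (g : nat -> V) := forall l, l < 2 * m + 1 -> (g l \in A) = ~~ odd l.

Lemma bipartite_good_swap (Q : seq bool) g p :
  {in gtn (2 * m + 1) &, injective g} -> alternating g -> ~~ odd p -> 0 < p < 2 * m ->
  exists j, [/\ ~~ odd j, 0 < j < 2 * m, fits_at E Q g p (g j) & fits_at E Q g j (g p)].
Proof.
move=> ginj alt_g ep hp.
pose s := [seq i.*2 | i <- iota 1 m.-1].
have sP j : j \in s -> exists2 i, j = i.*2 & 0 < i < m.
  by case/mapP => i; rewrite mem_iota => hi ->; exists i => //; lia.
have us : uniq s by rewrite map_inj_uniq ?iota_uniq //; apply: double_inj.
have /hasP [j js /andP [fpj fjp]] :
    has (fun j => fits_at E Q g p (g j) && fits_at E Q g j (g p)) s.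
  apply: has_of_count_lt; rewrite size_map size_iota.
  apply: leq_ltn_trans (count_bad_swaps_le E Q p (D1 := A) (D2 := A) (D3 := ~: A) ginj us _ _) _.
  - by move=> j /sP [i -> hi]; lia.
  - by move=> j /sP [i -> hi]; rewrite !inE !alt_g; try split; lia.
  have gpA : g p \in A by rewrite alt_g //; lia.
  have gp1B : g p.-1 \notin A by rewrite alt_g; lia.
  have gp2B : g p.+1 \notin A by rewrite alt_g; lia.
  have := missing_from_B_le (nth false Q p.-1) gp1B.
  have := missing_from_B_le (~~ nth false Q p) gp2B.
  have := missing_from_A_le true gpA; have := missing_from_A_le false gpA; lia.
have [i ji hi] := sP j js; exists j; split=> //; lia.
Qed.

Definition bipartite_arrangement (Q : seq bool) x y g :=
  [/\ arrangement (2 * m + 1) x y g, alternating g, fits E Q g 0 & fits E Q g (2 * m).-1].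

Lemma bipartite_arrangement_improve (Q : seq bool) x y g :
  bipartite_arrangement Q x y g -> 0 < misfits E Q (2 * m + 1) g ->
  exists2 g', bipartite_arrangement Q x y g' &
              misfits E Q (2 * m + 1) g' < misfits E Q (2 * m + 1) g.
Proof.
move=> [arr_g alt_g fit0 fitK] /misfitP [l ln nfl]; have [ginj _ _] := arr_g.
have [p [lp ep hp]] : exists p, [/\ l \in [:: p.-1; p], ~~ odd p & 0 < p < 2 * m].
  have l0 : l != 0 by apply: contraNneq nfl => ->.
  have lK : l != (2 * m).-1 by apply: contraNneq nfl => ->.
  by exists (l + odd l); rewrite !inE; split; lia.
have [j [ej hj fpj fjp]] := bipartite_good_swap Q ginj alt_g ep hp.
exists (swap_at g p j); last by apply: misfits_swap_lt lp nfl fpj fjp; rewrite ?inE; lia.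
split.
- by apply: arrangement_swap arr_g _ _; lia.
- by move=> i hi; rewrite /swap_at /transp; case: eqP => [->|_]; [|case: eqP => [->|_]];
     rewrite alt_g; lia.
- by rewrite fits_swap_out // !inE; lia.
- by rewrite fits_swap_out // !inE; lia.
Qed.

Lemma bipartite_initial_arrangement (Q : seq bool) x y :
  x \in A -> y \in A -> x != y -> exists g, bipartite_arrangement Q x y g.
Proof.
move=> xA yA xy.
have deg2 b a : 1 < oriented_deg E b a by have := degE a; case: b => /=; lia.
have [b1 xb1 _] := exists_oriented_nbr_neq x (deg2 (nth false Q 0) x).
have [b2 yb2 b21] := exists_oriented_nbr_neq b1 (deg2 (~~ nth false Q (2 * m).-1) y).
have [ra [ura raA size_ra last_ra]] := exists_seq_ends xA yA xy.
have [rb [urb rbB size_rb last_rb]] :=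
  exists_seq_ends (oriented_nbr_of_A xA xb1) (oriented_nbr_of_A yA yb2) (ltac:(by rewrite eq_sym) : b1 != b2).
rewrite cardA in size_ra; rewrite cardB in size_rb.
pose g l := if odd l then nth b1 (b1 :: rb) l./2 else nth x (x :: ra) l./2.
have alt_g : alternating g.
  move=> l ln; rewrite /g; case: ifP => ol.
    by apply/negbTE; rewrite -in_setC rbB // mem_nth //= size_rb; lia.
  by rewrite raA // mem_nth //= size_ra; lia.
have g2m : g (2 * m) = y.
  rewrite /g ifF; last lia.
  rewrite (_ : (2 * m)./2 = (size (x :: ra)).-1); last by rewrite /= size_ra; lia.
  by rewrite nth_last /=.
exists g; split=> //.
- split=> //; last by rewrite addn1.
  move=> a b; rewrite !inE => an bn gab.
  have oab : odd a = odd b by have := alt_g a an; rewrite gab alt_g // => /negb_inj.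
  move: gab; rewrite /g -oab; case: ifP => oa /eqP; rewrite nth_uniq //=; try lia.
rewrite /fits prednK ?g2m; last lia.
rewrite /g ifT; last lia.
rewrite (_ : ((2 * m).-1)./2 = (size (b1 :: rb)).-1); last by rewrite /= size_rb; lia.
by rewrite nth_last /= last_rb oriented_edgeC.
Qed.

Lemma bipartite_hamilton_copy x y : x \in A -> y \in A -> x != y ->
  forall Q : path_orientation (2 * m + 1), hamilton_copy_xy E Q x y.
Proof.
move=> xA yA xy Q; have [g0 arr_g0] := bipartite_initial_arrangement Q xA yA xy.
have [g [arr_g _ _ _] /eqP] :=
  misfits_descent (bipartite_arrangement_improve (Q := Q) (x := x) (y := y)) arr_g0.
move/eqP; apply: hamilton_copy_of_arrangement arr_g.
by rewrite -(cardsC A) cardA cardB; lia.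
Qed.

End BipartiteDigraph.

Theorem proposition4p2 :
  (* (i) *)
  (forall (V : finType) (E : rel V), digraph E ->
     (forall v : V, 7 * #|V| <= 8 * outdeg E v /\ 7 * #|V| <= 8 * indeg E v) ->
     forall x y : V, x != y ->
     forall Q : path_orientation #|V|, hamilton_copy_xy E Q x y)
  /\
  (* (ii) *)
  (forall (m : nat), 10 <= m ->
   forall (V : finType) (E : rel V) (A : {set V}), digraph E ->
     #|A| = m.+1 -> #|~: A| = m ->
     (forall u v : V, E u v -> (u \in A) != (v \in A)) ->
     (forall v : V, 7 * m + 2 <= 8 * outdeg E v /\ 7 * m + 2 <= 8 * indeg E v) ->
     forall x y : V, x \in A -> y \in A -> x != y ->
     forall Q : path_orientation (2 * m + 1), hamilton_copy_xy E Q x y).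
Proof.
split=> [V E irrE degE | m m10 V E A _ cardA cardB bipE degE].
  exact: dense_hamilton_copy.
by apply: bipartite_hamilton_copy; first lia.
Qed.
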